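(* Let $p(\mathbf{x};\theta)=f(\mathbf{x};\theta)/z(\theta)$ be a pairwise exponential family graphical model with parameter $\theta\in\Theta$, let $\phi=\mathrm{diag}(\theta)$, $\mu=z(\theta)/z(\phi)$, let $n\ge 1$ be an integer, $\gamma_k=\binom{n+k-1}{k}$, and let $\nu>0$. Let $\widetilde{T}_1,\widetilde{T}_2,\ldots$ be i.i.d. copies of $\widetilde{T}=\frac1N\sum_{i=1}^N f(\mathbf{y}_i;\theta)/f(\mathbf{y}_i;\phi)$ with $\mathbf{y}_i\overset{iid}{\sim}p(\cdot;\phi)$, let $U_k=\prod_{j=1}^k(1-\nu\widetilde{T}_j)$ (with $U_0=1$), let $R$ be a nonnegative-integer-valued random variable independent of the $\widetilde{T}_j$ with $\mathbb{P}(R\ge k)>0$ for all $k$, and set $$T=\sum_{k=0}^{R}\frac{\gamma_k}{\mathbb{P}(R\ge k)}\,U_k .$$ Suppose $\nu$ is such that $\mathbb{E}|1-\nu\widetilde{T}|<1$. Then $\mathbb{E}(|T|)<\infty$.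
   Context: A pairwise exponential family graphical model (PEGM) on $\mathbf{x}=(x_1,\dots,x_p)$ has unnormalized density $f(\mathbf{x};\theta)=\exp\{\sum_j T(x_j)\theta_{jj}+\sum_{j\ne k}T(x_j,x_k)\theta_{jk}\}$ with respect to a dominating measure, where $T(\cdot)$ and $T(\cdot,\cdot)$ are fixed sufficient statistics, $\theta\in\mathbb{R}^{p\times p}$, $z(\theta)=\int f(\mathbf{x};\theta)\,d\mathbf{x}$, and $\Theta=\{\theta: z(\theta)<\infty\}$. For $\theta\in\Theta$, $\phi=\mathrm{diag}(\theta)$ denotes the matrix with the same diagonal as $\theta$ and all off-diagonal entries zero (the independence model), assumed to lie in $\Theta$. $N\ge1$ is an integer. *)

From HB Require Import structures.
From mathcomp Require Import all_boot all_order all_algebra.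
From mathcomp Require Import all_classical all_reals all_analysis.
Set Implicit Arguments. Unset Strict Implicit. Unset Printing Implicit Defensive.
Import Order.TTheory GRing.Theory Num.Theory.
Local Open Scope classical_set_scope.
Local Open Scope ring_scope.

Section PEGM.
Context {R : realType} {d : measure_display} {X : measurableType d} {p : nat}.

(* unnormalized PEGM density f(x;theta): the point x in X has coordinates
   coord x j (j < p); T1 = T(.), T2 = T(.,.) *)
Definition pegm_f (coord : X -> 'I_p -> R) (T1 : R -> R) (T2 : R -> R -> R)
  (theta : 'M[R]_p) (x : X) : R :=
  expR (\sum_(j < p) T1 (coord x j) * theta j j
        + \sum_(j < p) \sum_(k < p | k != j) T2 (coord x j) (coord x k) * theta j k).

Definition pegm_z (lam : {measure set X -> \bar R}) (coord : X -> 'I_p -> R)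
  (T1 : R -> R) (T2 : R -> R -> R) (theta : 'M[R]_p) : \bar R :=
  (\int[lam]_x (pegm_f coord T1 T2 theta x)%:E)%E.

Definition diagpart (theta : 'M[R]_p) : 'M[R]_p :=
  \matrix_(j, k) (if j == k then theta j k else 0).

End PEGM.

(* Mutual independence of the family {R} u {y_(j,i) : j in nat, i < N}:
   product rule for every finite subfamily (missing members of the family
   are covered by taking the whole space as their event). *)
Definition mutually_indep {R : realType} {dO : measure_display} {Omega : measurableType dO}
  {d : measure_display} {X : measurableType d} {N : nat}
  (P : probability Omega R) (y : nat -> 'I_N -> Omega -> X) (Rr : Omega -> nat) : Prop :=
  forall (s : seq (nat * 'I_N)) (A : nat -> 'I_N -> set X) (B : set nat),
    uniq s -> (forall j i, measurable (A j i)) ->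
    P (Rr @^-1` B `&` \big[setI/setT]_(ji <- s) (y ji.1 ji.2 @^-1` A ji.1 ji.2))
    = (fine (P (Rr @^-1` B)) * \prod_(ji <- s) fine (P (y ji.1 ji.2 @^-1` A ji.1 ji.2)))%:E.

From HB Require Import structures.
From mathcomp Require Import all_boot all_order all_algebra.
From mathcomp Require Import all_classical all_reals all_analysis.
From mathcomp Require Import measurable_realfun.
Import Order.TTheory GRing.Theory Num.Theory.
Local Open Scope classical_set_scope.
Local Open Scope ring_scope.

(* Let Z_j = |1 - nu Ttil_j|, a function of the j-th block of samples, and
   a = E Z_0 < 1.  As R is independent of the i.i.d. blocks,
   E[1_{R >= k} Z_0 ... Z_{k-1}] = P(R >= k) a^k, so by Tonelli
   E|T| <= sum_k gamma_k / P(R >= k) * E[1_{R >= k} |U_k|] = sum_k gamma_k a^k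
        = (1 - a)^-n < +oo.
   The independence hypothesis is a product rule for coordinate events only; it
   is upgraded one block at a time: as functions of the event (then of the
   function) attached to the current block, both sides are finite measures that
   agree on rectangles, hence on all measurable sets (pi-lambda), hence on all
   nonnegative measurable functions. *)

Lemma indic_bigsetI {R : numDomainType} {T I : Type} (s : seq I)
    (A : I -> set T) x :
  \1_(\big[setI/setT]_(i <- s) A i) x = \prod_(i <- s) \1_(A i) x :> R.
Proof.
elim: s => [|i s IH]; first by rewrite !big_nil indicT.
by rewrite !big_cons indicI /= IH.
Qed.

(** * Measures with a density and their images *)

Section density_measure.
Context {R : realType} {d : measure_display} {T : measurableType d}
  (mu : {measure set T -> \bar R}) (h : T -> R).

Definition density_measure (mh : measurable_fun setT h)
  (h0 : forall x, 0 <= h x) (A : set T) : \bar R :=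
  (\int[mu]_(x in A) (h x)%:E)%E.

Variables (mh : measurable_fun setT h) (h0 : forall x, 0 <= h x).
Local Notation nu := (density_measure mh h0).

Let nu0 : nu set0 = 0%E. Proof. exact: integral_set0. Qed.

Let nu_ge0 A : (0 <= nu A)%E.
Proof. by apply: integral_ge0 => x _; rewrite lee_fin. Qed.

Let nu_sigma_additive : semi_sigma_additive nu.
Proof.
apply: semi_sigma_additive_nng_induced => [|x]; last by rewrite lee_fin.
exact/measurable_EFinP.
Qed.

HB.instance Definition _ := isMeasure.Build _ _ _ nu nu0 nu_ge0 nu_sigma_additive.

Lemma density_measureE A : nu A = (\int[mu]_x (h x * \1_A x)%:E)%E.
Proof.
rewrite /density_measure integral_mkcond; apply: eq_integral => x _.
by rewrite /patch indicE; case: ifP; rewrite ?mulr1 ?mulr0.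
Qed.

Import HBNNSimple.

Let integral_density_nnsfun (f : {nnsfun T >-> R}) :
  (\int[nu]_x (f x)%:E = \int[mu]_x (h x * f x)%:E)%E.
Proof.
rewrite integralT_nnsfun sintegralE.
under eq_integral do rewrite fimfunE mulr_fsumr -fsumEFin //.
rewrite ge0_integral_fsum //; last 2 first.
- move=> r; apply/measurable_EFinP/measurable_funM => //.
  apply: measurable_funM; [exact: measurable_cst | exact: measurable_indic].
- move=> r x _; rewrite lee_fin mulr_ge0 //.
  by rewrite -lee_fin EFinM nnfun_muleindic_ge0.
apply: eq_fsbigr => r _; rewrite /= density_measureE.
have [r0|r0] := leP 0 r; last first.
  by rewrite preimage_nnfun0 // !integral0_eq ?mule0 // => x _;
    rewrite indic0 !mulr0.
rewrite -ge0_integralZl_EFin //.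
- by apply: eq_integral => x _; rewrite mulrCA.
- by move=> x _; rewrite lee_fin mulr_ge0 // indicE.
- by apply/measurable_EFinP/measurable_funM => //; exact: measurable_indic.
Qed.

Lemma ge0_integral_density (f : T -> R) :
  measurable_fun setT f -> (forall x, 0 <= f x) ->
  (\int[nu]_x (f x)%:E = \int[mu]_x (h x * f x)%:E)%E.
Proof.
move=> mf f0; have mEf : measurable_fun setT (EFin \o f) by exact/measurable_EFinP.
pose f_ := nnsfun_approx measurableT mEf.
have f_nd x : {homo (f_ ^~ x) : m n / (m <= n)%N >-> m <= n}.
  by move=> m n mn; exact/lefP/nd_nnsfun_approx.
have f_cvg x : (EFin \o f_ ^~ x) @ \oo --> (f x)%:E.
  by apply: cvg_nnsfun_approx => // ? _; rewrite lee_fin.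
transitivity (limn (fun n => \int[nu]_x (f_ n x)%:E))%E.
  rewrite -monotone_convergence //.
  - by apply: eq_integral => x _; apply/esym/cvg_lim => //; exact: f_cvg.
  - by move=> n; exact/measurable_EFinP.
  - by move=> n x _; rewrite lee_fin.
  - by move=> x _ m n mn; rewrite lee_fin f_nd.
under eq_fun do rewrite integral_density_nnsfun.
rewrite -monotone_convergence //.
- apply: eq_integral => x _; apply: cvg_lim => //.
  under eq_fun do rewrite EFinM.
  by rewrite EFinM; apply: cvgeZl => //; exact: f_cvg.
- by move=> n; apply/measurable_EFinP/measurable_funM.
- by move=> n x _; rewrite lee_fin mulr_ge0.
- by move=> x _ m n mn; rewrite lee_fin ler_wpM2l ?f_nd.
Qed.

End density_measure.
Arguments density_measure {R d T} mu {h} mh h0 A.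

Section weighted_image.
Context {R : realType} {d1 d2 : measure_display} {T1 : measurableType d1}
  {T2 : measurableType d2} (mu : {measure set T1 -> \bar R}).

Lemma ge0_integral_pushforward_density (h : T1 -> R)
    (mh : measurable_fun setT h) (h0 : forall x, 0 <= h x) (Y : T1 -> T2)
    (f : T2 -> R) :
  measurable_fun setT Y -> measurable_fun setT f -> (forall t, 0 <= f t) ->
  (\int[pushforward (density_measure mu mh h0) Y]_t (f t)%:E =
   \int[mu]_x (h x * f (Y x))%:E)%E.
Proof.
move=> mY mf f0; rewrite ge0_integral_pushforward //; last first.
- by move=> t _; rewrite lee_fin.
- exact/measurable_EFinP.
by rewrite preimage_setT ge0_integral_density //; exact: measurableT_comp.
Qed.

Variables (h1 h2 : T1 -> R) (Y1 Y2 : T1 -> T2).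
Hypotheses (mh1 : measurable_fun setT h1) (h10 : forall x, 0 <= h1 x).
Hypotheses (mh2 : measurable_fun setT h2) (h20 : forall x, 0 <= h2 x).
Hypotheses (mY1 : measurable_fun setT Y1) (mY2 : measurable_fun setT Y2).

Lemma integral_weighted_image_unique (G : set (set T2)) (g : T2 -> R) :
  measurable = <<s G >> -> setI_closed G -> G setT ->
  (forall A, G A ->
    \int[mu]_x (h1 x * \1_A (Y1 x))%:E = \int[mu]_x (h2 x * \1_A (Y2 x))%:E)%E ->
  (\int[mu]_x (h2 x)%:E < +oo)%E ->
  measurable_fun setT g -> (forall t, 0 <= g t) ->
  (\int[mu]_x (h1 x * g (Y1 x))%:E = \int[mu]_x (h2 x * g (Y2 x))%:E)%E.
Proof.
move=> mG GI GT eqG h2_fin mg g0.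
rewrite -(ge0_integral_pushforward_density _ mh1 h10 _ _ mY1 mg g0).
rewrite -(ge0_integral_pushforward_density _ mh2 h20 _ _ mY2 mg g0).
apply: eq_measure_integral => A mA _.
apply: (measure_unique G (fun=> setT)) => //= [|B GB|_].
- by rewrite bigcup_const.
- by rewrite /pushforward !density_measureE; exact: eqG.
rewrite /pushforward density_measureE (eqG _ GT) -density_measureE.
by rewrite /density_measure; exact: h2_fin.
Qed.

End weighted_image.
Arguments integral_weighted_image_unique {R d1 d2 T1 T2} mu {h1 h2 Y1 Y2}.

(** * Independent identically distributed blocks *)

Section rectangle.
Context {d : measure_display} {X : measurableType d} {N : nat}.

Definition rectangle (F : 'I_N -> set X) : set (N.-tuple X) :=
  [set t | forall i, F i (tnth t i)].

Definition rectangles : set (set (N.-tuple X)) :=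
  [set A | exists2 F, (forall i, measurable (F i)) & A = rectangle F].

Lemma rectangleE F :
  rectangle F = \big[setI/setT]_(i <- index_enum 'I_N) ((@tnth N X)^~ i @^-1` F i).
Proof.
rewrite -bigcap_seq; apply/seteqP; split=> t /= tF i; first by move=> _; exact: tF.
exact: tF (mem_index_enum i).
Qed.

Lemma indic_rectangle {R : numDomainType} F t :
  \1_(rectangle F) t = \prod_(i < N) \1_(F i) (tnth t i) :> R.
Proof. by rewrite rectangleE indic_bigsetI. Qed.

Lemma measurable_rectangle F : (forall i, measurable (F i)) ->
  measurable (rectangle F).
Proof.
move=> mF; rewrite rectangleE; apply: bigsetI_measurable => i _.
by rewrite -[X in measurable X]setTI; exact: measurable_tnth.
Qed.

Lemma rectangles_setI_closed : setI_closed rectangles.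
Proof.
move=> _ _ [F mF ->] [G mG ->]; exists (fun i => F i `&` G i).
  by move=> i; exact: measurableI.
apply/seteqP; split=> t /=; first by move=> [tF tG] i; split.
by move=> tFG; split=> i; case: (tFG i).
Qed.

Lemma measurable_tuple_rectangles : measurable = <<s rectangles >>.
Proof.
apply/seteqP; split; last first.
  apply: smallest_sub; first exact: sigma_algebra_measurable.
  by move=> _ [F mF ->]; exact: measurable_rectangle.
apply: smallest_sub; first exact: smallest_sigma_algebra.
move=> B; rewrite -bigcup_seq => -[i _ [A mA <-]]; apply: sub_sigma_algebra.
exists (fun j => if j == i then A else setT) => [j|]; first by case: ifP.
apply/seteqP; split=> t /=; first by move=> [_ At] j; case: eqP => // ->.
by move=> tA; split => //; have := tA i; rewrite eqxx.
Qed.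

End rectangle.

Section iid_samples.
Context {R : realType} {dO d : measure_display} {Omega : measurableType dO}
  {X : measurableType d} (P : probability Omega R) {N : nat}
  (y : nat -> 'I_N -> Omega -> X) (Rr : Omega -> nat).
Hypotheses (my : forall j i, measurable_fun setT (y j i))
  (mRr : forall B, measurable (Rr @^-1` B))
  (indep : mutually_indep P y Rr)
  (ident : forall j i A, measurable A -> P (y j i @^-1` A) = P (y 0 i @^-1` A)).

(* [sample j] is the j-th block (y_j1, ..., y_jN), from which Ttil_j is computed. *)
Definition sample j w : N.-tuple X := [tuple y j i w | i < N].

Definition sample_mean (g : N.-tuple X -> R) : R :=
  fine (\int[P]_w (g (sample 0 w))%:E).

Definition factorizes k B (g : nat -> N.-tuple X -> R) : Prop :=
  (\int[P]_w (\1_(Rr @^-1` B) w * \prod_(j < k) g j (sample j w))%:E =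
   (fine (P (Rr @^-1` B)) * \prod_(j < k) sample_mean (g j))%:E)%E.

Definition nonneg_finite_mean (g : N.-tuple X -> R) : Prop :=
  [/\ measurable_fun setT g, forall t, 0 <= g t &
      (\int[P]_w (g (sample 0 w))%:E)%E \is a fin_num].

Lemma measurable_sample j : measurable_fun setT (sample j).
Proof.
apply/measurable_fun_tnthP => i.
by rewrite (_ : _ \o _ = y j i) //; apply/funext => w; rewrite /= tnth_mktuple.
Qed.

Lemma measurable_sample_preimage j A : measurable A ->
  measurable (sample j @^-1` A).
Proof.
by move=> mA; rewrite -[X in measurable X]setTI; exact: measurable_sample.
Qed.

Lemma integral_indic_sample j A : measurable A ->
  (\int[P]_w (\1_A (sample j w))%:E = P (sample j @^-1` A))%E.
Proof.
move=> mA; rewrite (integral_indic _ measurableT) ?setIT //.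
exact: measurable_sample_preimage.
Qed.

Lemma integral_indep_indic (s : seq (nat * 'I_N)) B (A : nat -> 'I_N -> set X) :
  uniq s -> (forall j i, measurable (A j i)) ->
  (\int[P]_w (\1_(Rr @^-1` B) w *
     \prod_(ji <- s) \1_(A ji.1 ji.2) (y ji.1 ji.2 w))%:E =
   (fine (P (Rr @^-1` B)) *
     \prod_(ji <- s) fine (P (y ji.1 ji.2 @^-1` A ji.1 ji.2)))%:E)%E.
Proof.
move=> us mA; rewrite -indep //.
set E := \big[setI/setT]_(ji <- s) (y ji.1 ji.2 @^-1` A ji.1 ji.2).
under eq_integral => w _.
  rewrite -(indic_bigsetI s (fun ji => y ji.1 ji.2 @^-1` A ji.1 ji.2)) -/E.
  rewrite (_ : _ * _ = \1_(Rr @^-1` B `&` E) w); last by rewrite indicI.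
  over.
rewrite integral_indic ?setIT //; apply: measurableI => //.
apply: bigsetI_measurable => -[j i] _.
by rewrite -[X in measurable X]setTI; exact: my.
Qed.

Lemma mean_indic_rectangle F : (forall i, measurable (F i)) ->
  sample_mean (\1_(rectangle F)) = \prod_(i < N) fine (P (y 0 i @^-1` F i)).
Proof.
move=> mF; have := integral_indep_indic [seq (0%N, i) | i <- index_enum 'I_N]
  setT (fun _ => F).
rewrite map_inj_uniq ?index_enum_uniq //; last by move=> i i' [].
rewrite preimage_setT probability_setT mul1r big_map => /(_ isT (fun _ => mF)).
move=> /(congr1 fine) /= <-.
congr fine; apply: eq_integral => w _; rewrite indicT mul1r big_map indic_rectangle.
by congr EFin; apply: eq_bigr => i _; rewrite tnth_mktuple.
Qed.

Lemma factorizes_rectangles k B (F : nat -> 'I_N -> set X) :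
  (forall j i, measurable (F j i)) ->
  factorizes k B (fun j => \1_(rectangle (F j))).
Proof.
move=> mF; pose s := [seq (j, i) | j <- index_iota 0 k, i <- index_enum 'I_N].
have us : uniq s.
  apply: allpairs_uniq; [exact: iota_uniq | exact: index_enum_uniq |].
  by move=> [? ?] [? ?].
transitivity (\int[P]_w (\1_(Rr @^-1` B) w *
    \prod_(ji <- s) \1_(F ji.1 ji.2) (y ji.1 ji.2 w))%:E)%E.
  apply: eq_integral => w _; rewrite big_allpairs big_mkord.
  congr (_ * _)%:E; apply: eq_bigr => j _; rewrite indic_rectangle.
  by apply: eq_bigr => i _; rewrite tnth_mktuple.
rewrite integral_indep_indic // big_allpairs big_mkord.
congr (_ * _)%:E; apply: eq_bigr => j _; rewrite mean_indic_rectangle //.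
by apply: eq_bigr => i _; rewrite ident.
Qed.

Lemma nonneg_finite_mean_indic A : measurable A ->
  nonneg_finite_mean (\1_A).
Proof.
move=> mA; split; [exact: measurable_indic | by move=> t; rewrite indicE |].
rewrite integral_indic_sample // fin_num_measure //.
exact: measurable_sample_preimage.
Qed.

Lemma eq_factorizes k B (g g' : nat -> N.-tuple X -> R) :
  (forall j : 'I_k, g j = g' j) ->
  factorizes k B g -> factorizes k B g'.
Proof.
move=> gg'; rewrite /factorizes (eq_bigr _ (fun j _ => congr1 sample_mean (gg' j))).
move=> <-; apply: eq_integral => w _; congr (_ * _)%:E.
by apply: eq_bigr => j _; rewrite gg'.
Qed.

Section factorizes_update.
Variables (k m : nat) (B : set nat) (g : nat -> N.-tuple X -> R).
Hypotheses (mk : (m < k)%N) (g_reg : forall j, nonneg_finite_mean (g j)).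

Let upd h j := if j == m then h else g j.

Let prodD1 (a : nat -> R) :
  \prod_(j < k) a j = a m * \prod_(j < k | (j : nat) != m) a j.
Proof. by rewrite (bigD1 (Ordinal mk)). Qed.

Let H w := \1_(Rr @^-1` B) w * \prod_(j < k | (j : nat) != m) g j (sample j w).
Let c := fine (P (Rr @^-1` B)) * \prod_(j < k | (j : nat) != m) sample_mean (g j).

Let mH : measurable_fun setT H.
Proof.
apply: measurable_funM; first exact: measurable_indic.
under eq_fun do rewrite -big_filter; apply: measurable_prod => j _.
by case: (g_reg j) => mg _ _; exact: measurableT_comp mg (measurable_sample j).
Qed.

Let H_ge0 w : 0 <= H w.
Proof. by rewrite mulr_ge0 ?prodr_ge0 // => j _; case: (g_reg j). Qed.

Let c_ge0 : 0 <= c.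
Proof.
rewrite mulr_ge0 ?fine_ge0 ?prodr_ge0 // => j _; rewrite fine_ge0 //.
by apply: integral_ge0 => w _; case: (g_reg j) => _ g0 _; rewrite lee_fin.
Qed.

Let factorizes_updE h : nonneg_finite_mean h ->
  factorizes k B (upd h) <->
  (\int[P]_w (H w * h (sample m w))%:E = \int[P]_w (c * h (sample 0 w))%:E)%E.
Proof.
move=> [mh h0 h_fin]; rewrite /factorizes.
have -> : (fun w => (\1_(Rr @^-1` B) w * \prod_(j < k) upd h j (sample j w))%:E) =
    (fun w => (H w * h (sample m w))%:E).
  apply/funext => w; rewrite (prodD1 (fun j => upd h j (sample j w))) /upd eqxx.
  rewrite mulrCA mulrC /H; congr (_ * _ * _)%:E.
  by apply: eq_bigr => j /negbTE ->.
have -> : (\int[P]_w (c * h (sample 0 w))%:E = (c * sample_mean h)%:E)%E.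
  under eq_integral do rewrite EFinM.
  rewrite ge0_integralZl_EFin //; last 2 first.
  - by move=> w _; rewrite lee_fin.
  - exact/measurable_EFinP/measurableT_comp/measurable_sample.
  by rewrite [RHS]EFinM /sample_mean (fineK h_fin).
rewrite (bigD1 (Ordinal mk)) //= /upd eqxx /c mulrCA mulrC.
by rewrite (eq_big (fun j : 'I_k => (j : nat) != m) (fun j => sample_mean (g j))) //
  => j jm; rewrite ifN.
Qed.

Lemma factorizes_update h :
  (forall F, (forall i, measurable (F i)) ->
    factorizes k B (upd (\1_(rectangle F)))) ->
  nonneg_finite_mean h -> factorizes k B (upd h).
Proof.
move=> rectF h_reg; apply/(factorizes_updE _ h_reg); case: h_reg => mh h0 _.
have rectT : rectangles [set: N.-tuple X].
  by exists (fun=> setT) => //; apply/seteqP; split.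
have c_fin : (\int[P]_w c%:E < +oo)%E.
  by rewrite integral_cst //= probability_setT mule1 ltey.
(* Both sides integrate h against finite measures (images of P weighted by H
   and by c) which agree on rectangles by [rectF]. *)
apply: (integral_weighted_image_unique P mH H_ge0 (measurable_cst c) (fun=> c_ge0)
  (measurable_sample m) (measurable_sample 0) rectangles h
  measurable_tuple_rectangles rectangles_setI_closed rectT _ c_fin mh h0).
move=> _ [F mF ->].
have mR := nonneg_finite_mean_indic _ (measurable_rectangle _ mF).
by apply/(factorizes_updE _ mR); exact: rectF.
Qed.

End factorizes_update.

Lemma factorizes_nonneg k B g :
  (forall j, nonneg_finite_mean (g j)) -> factorizes k B g.
Proof.
(* Rectangle indicators are replaced by arbitrary functions one block at a time. *)
suff: forall m B g (F : nat -> 'I_N -> set X),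
    (forall j, nonneg_finite_mean (g j)) -> (forall j i, measurable (F j i)) ->
    (forall j, (m <= j < k)%N -> g j = \1_(rectangle (F j))) ->
    factorizes k B g.
  move=> /(_ k B g (fun _ _ => setT)) + g_reg; apply=> // j.
  by move=> /andP[kj jk]; move: kj; rewrite leqNgt jk.
elim=> [|m IH] {}B {}g F g_reg mF g_rect.
  have := factorizes_rectangles k B F mF; apply: eq_factorizes => j.
  by rewrite g_rect //= ltn_ord.
have [km|mk] := leqP k m.
  apply: IH g_reg mF _ => j /andP[mj jk].
  by move: mj; rewrite leqNgt (leq_trans jk km).
apply: (@eq_factorizes k B (fun j => if j == m then g m else g j)) => [j|].
  by case: eqP => // ->.
apply: factorizes_update => // F' mF'.
apply: (IH B _ (fun j => if j == m then F' else F j)) => [j|j i|j /andP[mj jk]].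
- by case: ifP => // _; exact: nonneg_finite_mean_indic (measurable_rectangle _ mF').
- by case: ifP.
- case: eqVneq => // jm.
  by rewrite g_rect // ltn_neqAle eq_sym jm mj jk.
Qed.

Lemma integral_prod_samples k B (g : N.-tuple X -> R) :
  measurable_fun setT g -> (forall t, 0 <= g t) ->
  (\int[P]_w (g (sample 0 w))%:E)%E \is a fin_num ->
  (\int[P]_w (\1_(Rr @^-1` B) w * \prod_(j < k) g (sample j w))%:E =
   (fine (P (Rr @^-1` B)) * sample_mean g ^+ k)%:E)%E.
Proof.
move=> mg g0 g_fin; have := @factorizes_nonneg k B (fun=> g).
by rewrite /factorizes prodr_const card_ord; apply.
Qed.

End iid_samples.

(** * Randomly truncated series *)

Lemma measurable_fun_random_index {R : realType} {d : measure_display}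
    {T : measurableType d} (K : T -> nat) (S : nat -> T -> R) :
  (forall B, measurable (K @^-1` B)) -> (forall n, measurable_fun setT (S n)) ->
  measurable_fun setT (fun x => S (K x) x).
Proof.
move=> mK mS _ A mA; rewrite setTI.
have -> : (fun x => S (K x) x) @^-1` A = \bigcup_n (K @^-1` [set n] `&` S n @^-1` A).
  by apply/seteqP; split=> [x Ax|x [n _ [/= <-]]] //; exists (K x).
apply: bigcupT_measurable => n; apply: measurableI => //.
by rewrite -[X in measurable X]setTI; exact: mS.
Qed.

Lemma nneseries_le_of_sum_le {R : realType} (u : nat -> \bar R) (M : \bar R) :
  (forall k, (0 <= u k)%E) -> (forall K, (\sum_(k < K) u k <= M)%E) ->
  (\sum_(k <oo) u k <= M)%E.
Proof.
move=> u0 uM; apply: lime_le; first exact: is_cvg_nneseries.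
by apply: nearW => K; rewrite big_mkord.
Qed.

Section roulette.
Context {R : realType} {d : measure_display} {Omega : measurableType d}
  (P : probability Omega R) (K : Omega -> nat).
Hypotheses (mK : forall B, measurable (K @^-1` B))
  (K_tail_gt0 : forall k, (0 < P [set w | (k <= K w)%N])%E).

Local Notation tail k := (fine (P [set w | (k <= K w)%N])).

Let tail_gt0 k : 0 < tail k.
Proof.
apply: fine_gt0; rewrite K_tail_gt0 /=.
by rewrite (le_lt_trans (probability_le1 P (mK [set n | (k <= n)%N]))) ?ltey.
Qed.

Lemma integrable_roulette (gamma : nat -> R) (U : nat -> Omega -> R)
    (b : nat -> R) :
  (forall k, measurable_fun setT (U k)) ->
  (forall k, \int[P]_w (\1_(K @^-1` [set n | (k <= n)%N]) w * `|U k w|)%:E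
             = (tail k * b k)%:E)%E ->
  (\sum_(k <oo) (`|gamma k| * b k)%:E < +oo)%E ->
  P.-integrable setT
    (fun w => (\sum_(k < (K w).+1) gamma k / tail k * U k w)%:E).
Proof.
move=> mU intU sum_fin.
pose G k w := (`|gamma k| / tail k *
  (\1_(K @^-1` [set n | (k <= n)%N]) w * `|U k w|))%:E.
have c0 k : 0 <= `|gamma k| / tail k by rewrite divr_ge0 // ltW // tail_gt0.
have mG k : measurable_fun setT (G k).
  apply/measurable_EFinP/measurable_funM; first exact: measurable_cst.
  apply: measurable_funM; first exact: measurable_indic.
  exact: measurableT_comp (mU k).
have G0 k w : (0 <= G k w)%E.
  by rewrite lee_fin mulr_ge0 ?c0 // mulr_ge0 // indicE.
have intG k : (\int[P]_w G k w = (`|gamma k| * b k)%:E)%E.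
  rewrite /G; under eq_integral do rewrite EFinM.
  rewrite ge0_integralZl_EFin // ?intU; last first.
    apply/measurable_EFinP/measurable_funM; first exact: measurable_indic.
    exact: measurableT_comp (mU k).
  by rewrite -EFinM mulrA divfK // gt_eqF // tail_gt0.
have mT : measurable_fun setT
    (fun w => \sum_(k < (K w).+1) gamma k / tail k * U k w).
  apply: (measurable_fun_random_index K
    (fun n w => \sum_(k < n.+1) gamma k / tail k * U k w)) => // n.
  apply: measurable_sum => k.
  by apply: measurable_funM; [exact: measurable_cst | exact: mU].
apply/integrableP; split; first exact/measurable_EFinP.
apply: le_lt_trans sum_fin; rewrite -(eq_eseriesr (fun k _ => intG k)).
rewrite -integral_nneseries //; apply: ge0_le_integral => //.
- exact/measurable_EFinP/measurableT_comp.
- exact: (ge0_emeasurable_sum (h := G) (P := xpredT)).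
move=> w _; apply: le_trans (nneseries_lim_ge (K w).+1 _) => [|k _ _]; last exact: G0.
rewrite big_mkord sumEFin lee_fin; apply: le_trans (ler_norm_sum _ _ _) _.
apply: ler_sum => k _; rewrite indicE mem_set ?mul1r; last by rewrite /= -ltnS.
by rewrite normrM normf_div (@ger0_norm _ (tail k)) // ltW // tail_gt0.
Qed.

End roulette.

Lemma sum_binom_geometric_le {R : realFieldType} (a : R) (m K : nat) :
  0 <= a < 1 ->
  \sum_(k < K) ('C(m + k, k))%:R * a ^+ k <= ((1 - a)^-1) ^+ m.+1.
Proof.
move=> /andP[a0 a1]; set B := (1 - a)^-1.
have B0 : 0 <= B by rewrite invr_ge0 subr_ge0 ltW.
have aBE : 1 + a * B = B.
  have a1' : 1 - a != 0 by rewrite subr_eq0 gt_eqF.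
  by rewrite -[1 in LHS](mulfV a1') -mulrDl subrK mul1r.
have pascal m' K' : \sum_(k < K'.+1) ('C(m'.+1 + k, k))%:R * a ^+ k =
    \sum_(k < K'.+1) ('C(m' + k, k))%:R * a ^+ k +
    a * \sum_(k < K') ('C(m'.+1 + k, k))%:R * a ^+ k.
  rewrite big_ord_recl [X in _ = X + _]big_ord_recl /= !addn0 !bin0 -addrA.
  congr (_ + _); rewrite mulr_sumr -big_split /=; apply: eq_bigr => i _.
  rewrite /bump /= add1n addnS binS natrD mulrDl addSnnS; congr (_ + _).
  by rewrite exprS mulrCA.
elim: m K => [|m IHm] K.
  under eq_bigr do rewrite add0n binn mul1r.
  elim: K => [|K IHK]; first by rewrite big_ord0 expr1.
  rewrite big_ord_recl expr0; under eq_bigr do rewrite exprS.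
  by rewrite -mulr_sumr expr1 -[X in _ <= X]aBE lerD2l ler_wpM2l.
elim: K => [|K IHK]; first by rewrite big_ord0 exprn_ge0.
rewrite pascal; apply: le_trans (lerD (IHm K.+1) (ler_wpM2l a0 IHK)) _.
rewrite [X in _ <= X]exprS [X in _ + a * X]exprS mulrA.
by rewrite -{1}[B ^+ m.+1]mul1r -mulrDl aBE.
Qed.

Lemma nneseries_binom_geometric_lt {R : realType} (n : nat) (a : R) :
  (1 <= n)%N -> 0 <= a < 1 ->
  (\sum_(k <oo) (('C(n + k - 1, k))%:R * a ^+ k)%:E < +oo)%E.
Proof.
case: n => // m _ a01; have /andP[a0 _] := a01.
apply: le_lt_trans (ltey (((1 - a)^-1 ^+ m.+1)%:E)).
apply: nneseries_le_of_sum_le => [k|K]; first by rewrite lee_fin mulr_ge0 ?exprn_ge0.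
rewrite sumEFin lee_fin.
under eq_bigr do rewrite addSn subn1 /=.
exact: sum_binom_geometric_le.
Qed.

(** * The PEGM estimator *)

Lemma measurable_pegm_ratio {R : realType} {d : measure_display}
    {X : measurableType d} {p : nat} (coord : X -> 'I_p -> R)
    (T1 : R -> R) (T2 : R -> R -> R) (theta phi : 'M[R]_p) :
  (forall j, measurable_fun setT (fun x => T1 (coord x j))) ->
  (forall j k, measurable_fun setT (fun x => T2 (coord x j) (coord x k))) ->
  measurable_fun setT
    (fun x => pegm_f coord T1 T2 theta x / pegm_f coord T1 T2 phi x).
Proof.
move=> mT1 mT2.
pose s (th : 'M[R]_p) x := \sum_(j < p) T1 (coord x j) * th j j
  + \sum_(j < p) \sum_(k < p | k != j) T2 (coord x j) (coord x k) * th j k.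
have ms th : measurable_fun setT (s th).
  apply: measurable_funD; apply: measurable_sum => j.
    by apply: measurable_funM => //; exact: measurable_cst.
  under eq_fun do rewrite -big_filter; apply: measurable_sum => k.
  by apply: measurable_funM => //; exact: measurable_cst.
rewrite (_ : (fun x => _) = fun x => expR (s theta x - s phi x)).
  by apply: measurableT_comp => //; exact: measurable_funB.
by apply/funext => x; rewrite expRB.
Qed.

Lemma measurable_tuple_mean {R : realType} {d : measure_display}
    {X : measurableType d} {N : nat} (q : X -> R) :
  measurable_fun setT q ->
  measurable_fun setT (fun t : N.-tuple X => N%:R^-1 * \sum_(i < N) q (tnth t i)).
Proof.
move=> mq; apply: measurable_funM; first exact: measurable_cst.
by apply: measurable_sum => i; exact: measurableT_comp mq (measurable_tnth i).
Qed.

Theorem proposition1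
  (R : realType) (d : measure_display) (X : measurableType d) (p : nat)
  (lam : {measure set X -> \bar R}) (coord : X -> 'I_p -> R)
  (T1 : R -> R) (T2 : R -> R -> R)
  (hT1 : forall j : 'I_p, measurable_fun setT (fun x => T1 (coord x j)))
  (hT2 : forall j k : 'I_p, measurable_fun setT (fun x => T2 (coord x j) (coord x k)))
  (theta : 'M[R]_p)
  (htheta : (pegm_z lam coord T1 T2 theta < +oo)%E)
  (hphi : (pegm_z lam coord T1 T2 (diagpart theta) < +oo)%E)
  (n N : nat) (hn : (1 <= n)%N) (hN : (1 <= N)%N) (nu : R) (hnu : 0 < nu)
  (dO : measure_display) (Omega : measurableType dO) (P : probability Omega R)
  (y : nat -> 'I_N -> Omega -> X) (Rr : Omega -> nat)
  (hy_meas : forall j i, measurable_fun setT (y j i))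
  (hy_law : forall j i (A : set X), measurable A ->
     P (y j i @^-1` A) =
     ((fine (pegm_z lam coord T1 T2 (diagpart theta)))^-1%:E *
      \int[lam]_(x in A) (pegm_f coord T1 T2 (diagpart theta) x)%:E)%E)
  (hR_meas : forall B : set nat, measurable (Rr @^-1` B))
  (hR_pos : forall k : nat, (0 < P [set w | (k <= Rr w)%N])%E)
  (hindep : mutually_indep P y Rr) :
  let f := pegm_f coord T1 T2 in
  let phi := diagpart theta in
  (* Ttil j = the (j+1)-th i.i.d. copy of the importance-sampling estimator *)
  let Ttil := fun (j : nat) (w : Omega) =>
    N%:R^-1 * \sum_(i < N) f theta (y j i w) / f phi (y j i w) in
  let gamma := fun k : nat => ('C(n + k - 1, k))%:R : R in
  let U := fun (k : nat) (w : Omega) => \prod_(j < k) (1 - nu * Ttil j w) in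
  let T := fun w : Omega =>
    \sum_(k < (Rr w).+1) gamma k / fine (P [set w' | (k <= Rr w')%N]) * U k w in
  (\int[P]_w (`|1 - nu * Ttil 0%N w|)%:E < 1%:E)%E ->
  P.-integrable setT (fun w => (T w)%:E).
Proof.
move=> f phi Ttil gamma U T mean_lt1.
pose est (t : N.-tuple X) := N%:R^-1 * \sum_(i < N) f theta (tnth t i) / f phi (tnth t i).
have mest : measurable_fun setT est.
  exact: measurable_tuple_mean (measurable_pegm_ratio _ _ _ _ _ hT1 hT2).
have TtilE j : Ttil j = est \o sample y j.
  by apply/funext => w; rewrite /est /=; under [in RHS]eq_bigr do rewrite tnth_mktuple.
pose z t := `|1 - nu * est t|.
have mz : measurable_fun setT z.
  apply: measurableT_comp; first exact: normr_measurable.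
  apply: measurable_funB; first exact: measurable_cst.
  exact: measurable_funM (measurable_cst nu) mest.
have zE j w : `|1 - nu * Ttil j w| = z (sample y j w) by rewrite TtilE.
have z_ge0 : (0 <= \int[P]_w (z (sample y 0 w))%:E)%E.
  by apply: integral_ge0 => w _; rewrite lee_fin normr_ge0.
have z_lt1 : (\int[P]_w (z (sample y 0 w))%:E < 1%:E)%E.
  by under eq_integral do rewrite -zE.
have z_fin : (\int[P]_w (z (sample y 0 w))%:E)%E \is a fin_num.
  by rewrite ge0_fin_numE // (lt_trans z_lt1 (ltey _)).
have a01 : 0 <= sample_mean P y z < 1 by rewrite fine_ge0 //= -lte_fin fineK.
apply: (integrable_roulette P Rr hR_meas hR_pos gamma U (fun k => sample_mean P y z ^+ k)).
- move=> k; apply: measurable_prod => j _; rewrite TtilE.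
  apply/measurable_funB/measurable_funM/measurableT_comp => //.
  exact: measurable_sample.
- move=> k; transitivity (\int[P]_w (\1_(Rr @^-1` [set n | (k <= n)%N]) w *
      \prod_(j < k) z (sample y j w))%:E)%E.
    by apply: eq_integral => w _; rewrite /U normr_prod; under eq_bigr do rewrite zE.
  apply: (integral_prod_samples P y Rr hy_meas hR_meas hindep _ k _ z mz
    (fun t => normr_ge0 _) z_fin).
  by move=> j i A mA; rewrite !hy_law.
- under eq_eseriesr do rewrite ger0_norm ?ler0n //.
  exact: nneseries_binom_geometric_lt.
Qed.
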